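(* Let $q$ be a prime power, $n, m \in \mathbb{N}$. For every integer $0 \le d < mq^2$, $$\mathrm{rank}_{\mathbb{F}_q} \mathrm{EVAL}^m(\mathcal{V}, W_{d,n}) = |W_{d,n}| = \binom{d+n}{d}.$$
   Context: Work over the field $\mathbb{F} = \mathbb{F}_q(t_1,t_2)$ of rational functions. For $f \in \mathbb{F}[x_1,\dots,x_n]$ and $\mathbf{i} \in \mathbb{Z}_{\ge 0}^n$, the $\mathbf{i}$-th Hasse derivative $f^{(\mathbf{i})}$ is defined by the expansion $f(x+z) = \sum_{\mathbf{j}} f^{(\mathbf{j})}(x) z^{\mathbf{j}}$; the weight of $\mathbf{j}$ is $\mathrm{wt}(\mathbf{j}) = \sum_i j_i$. $W_{d,n}$ is the set of monomials in $x_1,\dots,x_n$ of degree at most $d$. For $S \subset \mathbb{F}^n$ and a set of monomials $W$, $\mathrm{EVAL}^m(S,W)$ is the matrix with columns indexed by $f \in W$, rows indexed by pairs $(x,\mathbf{j}) \in S \times \mathbb{Z}_{\ge 0}^n$ with $\mathrm{wt}(\mathbf{j}) < m$, and $((x,\mathbf{j}),f)$ entry $f^{(\mathbf{j})}(x)$. For a matrix over an extension field of $\mathbb{F}_q$, $\mathrm{rank}_{\mathbb{F}_q}$ is the largest size of a set of columns no nonzero $\mathbb{F}_q$-linear combination of which is zero. $\mathcal{V} = \{u t_1 + v t_2 : u, v \in \mathbb{F}_q^n\} \subseteq \mathbb{F}_q[t_1,t_2]^n$. *)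

From HB Require Import structures.
From mathcomp Require Import all_boot all_order all_algebra.
From mathcomp Require Import fraction.
From mathcomp Require Import mpoly.
Set Implicit Arguments. Unset Strict Implicit. Unset Printing Implicit Defensive.
Import GRing.Theory.
Local Open Scope ring_scope.

(* The rational function field F_q(t1,t2), realised as the fraction field of
   F_q[t1][t2] = {poly {poly Fq}}.  t1 is the inner variable, t2 the outer. *)
Definition ratfun2 (Fq : finFieldType) : fieldType := {fraction {poly {poly Fq}}}.

Definition iota2 (Fq : finFieldType) (c : Fq) : ratfun2 Fq := tofrac (c%:P%:P).
Definition t1 (Fq : finFieldType) : ratfun2 Fq := tofrac ('X%:P).
Definition t2 (Fq : finFieldType) : ratfun2 Fq := tofrac 'X.

(* Hasse derivatives, via the defining expansion f(x+z) = sum_j f^(j)(x) z^j: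
   hasse_shift f is f(x+z) as a polynomial in z (outer variables) with
   coefficients in K[x] (inner variables); f^(j) is its coefficient at z^j. *)
Definition hasse_shift (K : fieldType) (n : nat) (f : {mpoly K[n]})
  : {mpoly {mpoly K[n]}[n]} :=
  mmap (fun c : K => (c%:MP)%:MP) (fun i : 'I_n => ('X_i)%:MP + 'X_i) f.

Definition hasse (K : fieldType) (n : nat) (f : {mpoly K[n]}) (j : 'X_{1..n})
  : {mpoly K[n]} := (hasse_shift f)@_j.

Definition Vpoint (Fq : finFieldType) (n : nat) (uv : {ffun 'I_n -> Fq} * {ffun 'I_n -> Fq})
  : 'I_n -> ratfun2 Fq :=
  fun i => iota2 (uv.1 i) * t1 Fq + iota2 (uv.2 i) * t2 Fq.

(* EVAL^m(V, W_{d,n}): rows (x, j) with x in V (indexed by (u,v)) and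
   wt(j) = mdeg j < m; columns the monomials 'X_[a] with deg a <= d, i.e.
   a : 'X_{1..n < d.+1}.  Entry ((x,j), f) = f^(j)(x). *)
Definition EVAL (Fq : finFieldType) (n m d : nat)
  (r : ({ffun 'I_n -> Fq} * {ffun 'I_n -> Fq}) * 'X_{1..n < m})
  (a : 'X_{1..n < d.+1}) : ratfun2 Fq :=
  (hasse 'X_[bmnm a] (bmnm r.2)).@[Vpoint r.1].

Definition Fq_indep (Fq : finFieldType) (K : fieldType) (iota : Fq -> K)
  (Row Col : finType) (M : Row -> Col -> K) (S : {set Col}) : bool :=
  [forall c : {ffun Col -> Fq},
     [forall r : Row, \sum_(i in S) iota (c i) * M r i == 0]
       ==> [forall i in S, c i == 0]].

Definition rankFq (Fq : finFieldType) (K : fieldType) (iota : Fq -> K)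
  (Row Col : finType) (M : Row -> Col -> K) : nat :=
  \max_(S : {set Col} | Fq_indep iota M S) #|S|.

From HB Require Import structures.
From mathcomp Require Import all_boot all_order all_algebra.
From mathcomp Require Import fraction.
From mathcomp Require Import mpoly.

(* V is the grid T^n for the set T = {u t1 + v t2 : u, v in F_q} of q^2
   elements of F_q(t1,t2).  An F_q-combination of the columns of EVAL^m that
   vanishes is a polynomial f of degree d < m q^2 all of whose Hasse
   derivatives of weight < m vanish on T^n.  By induction on n, such an f is 0:
   if the leading coefficient of f in the last variable, of degree t, did not
   vanish to order m - t / q^2 at some point of T^(n-1), a suitable Taylor
   coefficient there would be a nonzero univariate polynomial of degree at most
   t vanishing to order more than t / q^2 at each of the q^2 points of T. *)

Set Implicit Arguments. Unset Strict Implicit. Unset Printing Implicit Defensive.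
Import GRing.Theory.

Section MultinomExtension.
Variable n : nat.
Implicit Types (i : 'X_{1..n}) (m : 'X_{1..n.+1}).

Definition mnm_ext i (l : nat) : 'X_{1..n.+1} :=
  [multinom if unlift ord_max j is Some j' then i j' else l | j < n.+1].

Definition mnm_low m : 'X_{1..n} := [multinom m (widen_ord (leqnSn n) j) | j < n].

Lemma lift_max_widen (j : 'I_n) : lift ord_max j = widen_ord (leqnSn n) j.
Proof. exact/val_inj/lift_max. Qed.

Lemma mnm_ext_lift i l j : mnm_ext i l (lift ord_max j) = i j.
Proof. by rewrite mnmE liftK. Qed.

Lemma mnm_ext_max i l : mnm_ext i l ord_max = l.
Proof. by rewrite mnmE unlift_none. Qed.

Lemma mnm_low_ext i l : mnm_low (mnm_ext i l) = i.
Proof. by apply/mnmP => j; rewrite mnmE -lift_max_widen mnm_ext_lift. Qed.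

Lemma mnm_ext_low m : mnm_ext (mnm_low m) (m ord_max) = m.
Proof.
apply/mnmP => j; case: (unliftP ord_max j) => [j' ->|->].
  by rewrite mnm_ext_lift mnmE lift_max_widen.
by rewrite mnm_ext_max.
Qed.

Lemma eq_mnm_ext m i l :
  (m == mnm_ext i l) = (mnm_low m == i) && (m ord_max == l).
Proof.
apply/eqP/andP => [->|[/eqP <- /eqP <-]]; last by rewrite mnm_ext_low.
by rewrite mnm_low_ext mnm_ext_max.
Qed.

Lemma mdeg_mnm_ext i l : mdeg (mnm_ext i l) = (mdeg i + l)%N.
Proof.
rewrite !mdegE big_ord_recr /= mnm_ext_max; congr (_ + _)%N.
by apply: eq_bigr => j _; rewrite -lift_max_widen mnm_ext_lift.
Qed.

End MultinomExtension.

(* Homogenising with the extra variable maps the monomials of degree at most d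
   in n variables bijectively onto those of degree exactly d in n + 1. *)
Lemma card_bmnm n d : #|{: 'X_{1..n < d.+1}}| = 'C(d + n, d).
Proof.
pose hom (a : 'X_{1..n < d.+1}) := mnm_ext a (d - mdeg a).
have hom_inj : injective hom.
  by move=> a b /(congr1 (@mnm_low n)); rewrite !mnm_low_ext => /val_inj.
have mem_hom (m : 'X_{1..n.+1}) : (m \in map hom (enum {: 'X_{1..n < d.+1}})) = (mdeg m == d).
  apply/mapP/eqP => [[a _ ->]|mdeg_m].
    by rewrite mdeg_mnm_ext subnKC // -ltnS bmdeg.
  have mdeg_low : mdeg m = (mdeg (mnm_low m) + m ord_max)%N.
    by rewrite -{1}(mnm_ext_low m) mdeg_mnm_ext.
  have low_lt : (mdeg (mnm_low m) < d.+1)%N by rewrite ltnS -mdeg_m mdeg_low leq_addr.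
  exists (BMultinom low_lt); first by rewrite mem_enum.
  by rewrite /hom /= -mdeg_m mdeg_low addKn mnm_ext_low.
rewrite cardE -(size_map hom) -size_basis; apply/perm_size/uniq_perm.
- by rewrite map_inj_uniq ?enum_uniq.
- exact: uniq_basis.
by move=> m; rewrite mem_hom basis_cover.
Qed.

Local Open Scope ring_scope.

Section TaylorRoots.
Variable K : fieldType.
Implicit Types (g : {poly K}) (b : K) (r : nat).

Lemma dvdp_taylor0 g b r :
  (forall l, (l < r)%N -> (g \Po ('X + b%:P))`_l = 0) -> ('X - b%:P) ^+ r %| g.
Proof.
move=> taylor0; set h := g \Po ('X + b%:P).
have h_low : take_poly r h = 0.
  by apply/polyP=> l; rewrite coef_take_poly coef0; case: ifP => // /taylor0.
rewrite -[g](comp_polyXaddC_K _ b) -/h -(poly_take_drop r h) h_low add0r.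
by rewrite comp_polyM rmorphXn /= comp_polyX dvdp_mull.
Qed.

Lemma size_taylor0 (S : seq K) g r : uniq S ->
  (forall b, b \in S -> forall l, (l < r)%N -> (g \Po ('X + b%:P))`_l = 0) ->
  g = 0 \/ (r * size S < size g)%N.
Proof.
move=> uniqS taylor0; have [->|g_neq0] := eqVneq g 0; [by left | right].
pose P := \prod_(b <- S) ('X - b%:P).
have P_dvd : P ^+ r %| g.
  rewrite -prodrXl; elim: S uniqS taylor0 {P} => [|b S IH] /=.
    by rewrite big_nil dvd1p.
  case/andP=> bS uniqS taylor0; rewrite big_cons Gauss_dvdp.
    rewrite dvdp_taylor0 ?IH // => [b' b'S|l lr]; apply: taylor0 => //.
      by rewrite inE b'S orbT.
    by rewrite inE eqxx.
  rewrite prodrXl coprimep_expl // coprimep_expr // coprimep_sym.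
  by rewrite coprimep_XsubC root_prod_XsubC.
have Pr_neq0 : P ^+ r != 0 by rewrite expf_neq0 // monic_neq0 ?monic_prod_XsubC.
move: (dvdp_leq g_neq0 P_dvd).
by rewrite -[size _]prednK ?size_poly_gt0 // size_exp size_prod_XsubC mulnC.
Qed.

End TaylorRoots.

Section TaylorShift.
Variables (K : fieldType) (n : nat).

(* [mshift a f] is f(a + X); its coefficients are the Hasse derivatives of f at a. *)
Definition mshift (a : 'I_n -> K) : {mpoly K[n]} -> {mpoly K[n]} :=
  mmap (@mpolyC n K) (fun i => (a i)%:MP + 'X_i).

HB.instance Definition _ a := GRing.RMorphism.copy (mshift a)
  (mmap (@mpolyC n K) (fun i => (a i)%:MP + 'X_i)).

Lemma hasse_eval f j a : (hasse f j).@[a] = (mshift a f)@_j.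
Proof.
rewrite /hasse -mcoeff_map_mpoly; congr (_@__).
rewrite /hasse_shift /mshift /mmap raddf_sum /=; apply: eq_bigr => m _.
rewrite rmorphM /=; congr (_ * _); first by rewrite /map_mpoly mmapC /= mevalC.
rewrite /mmap1 rmorph_prod; apply: eq_bigr => i _.
by rewrite rmorphXn rmorphD /= map_mpolyX /map_mpoly mmapC /= mevalXU.
Qed.

Lemma eq_mshift (a b : 'I_n -> K) : a =1 b -> mshift a =1 mshift b.
Proof.
move=> eq_ab f; apply: eq_bigr => m _; congr (_ * _).
by apply: mmap1_eq => i; rewrite eq_ab.
Qed.

Lemma mshiftZ a c f : mshift a (c *: f) = c%:MP * mshift a f.
Proof. exact: mmapZ. Qed.

End TaylorShift.

Section LastVariable.
Variables (K : fieldType) (n : nat).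

Lemma mcoeff_muni (p : {mpoly K[n.+1]}) i l : p@_(mnm_ext i l) = ((muni p)`_l)@_i.
Proof.
rewrite muniE coef_sum raddf_sum {1}(mpolyE p) raddf_sum /=.
apply: eq_bigr => m _; rewrite mcoeffZ mcoeffX coefZ coefXn eq_mnm_ext [l == _]eq_sym.
have -> : [multinom m (widen_ord (leqnSn n) j) | j < n] = mnm_low m by [].
have [->|ne] := eqVneq (mnm_low m) i; case: eqP => _ //=;
  rewrite ?mulr0 ?mcoeff0 // !mulr1 mcoeffZ mcoeffX.
  by rewrite eqxx mulr1.
by rewrite (negbTE ne) mulr0n mulr0.
Qed.

Lemma muni_eq0 (p : {mpoly K[n.+1]}) : (muni p == 0) = (p == 0).
Proof.
apply/eqP/eqP => [p0|->]; last exact: raddf0.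
by apply/mpolyP => m; rewrite -(mnm_ext_low m) mcoeff_muni p0 coef0 !mcoeff0.
Qed.

Lemma muniX_lift (j : 'I_n) : muni ('X_(lift ord_max j) : {mpoly K[n.+1]}) = ('X_j)%:P.
Proof.
rewrite muniE msuppX big_seq1 mcoeffX eqxx scale1r mnmE lift_eqF expr0 alg_polyC.
congr ('X_[_])%:P; apply/mnmP => i; rewrite !mnmE -lift_max_widen.
by rewrite (inj_eq (@lift_inj _ _)) eq_sym.
Qed.

Lemma muniX_max : muni ('X_ord_max : {mpoly K[n.+1]}) = 'X.
Proof.
rewrite muniE msuppX big_seq1 mcoeffX eqxx scale1r mnmE eqxx expr1.
have -> : [multinom (U_(ord_max) : 'X_{1..n.+1})%MM (widen_ord (leqnSn n) i) | i < n] = 0%MM.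
  by apply/mnmP => i; rewrite !mnmE -lift_max_widen eq_liftF.
by rewrite mpolyX0 scale1r.
Qed.

Definition ext_pt (a : 'I_n -> K) (b : K) (j : 'I_n.+1) : K :=
  if unlift ord_max j is Some j' then a j' else b.

Lemma ext_pt_lift a b j : ext_pt a b (lift ord_max j) = a j.
Proof. by rewrite /ext_pt liftK. Qed.

Lemma ext_pt_max a b : ext_pt a b ord_max = b.
Proof. by rewrite /ext_pt unlift_none. Qed.

Lemma muni_mshift_ext a b (f : {mpoly K[n.+1]}) :
  muni (mshift (ext_pt a b) f) = map_poly (mshift a) (muni f) \Po ('X + (b%:MP)%:P).
Proof.
rewrite (mpolyE f) (raddf_sum (mshift _)) !(raddf_sum (@muni n K)).
rewrite (raddf_sum (map_poly _)) (raddf_sum (comp_poly _)); apply: eq_bigr => m _.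
rewrite /= mshiftZ muniZ -mul_polyC !rmorphM /= muniC map_polyC comp_polyC.
rewrite [X in _ = X%:P * _]mmapC [mshift _ _]mmapX /mmap1 mpolyXE_id !rmorph_prod /=.
congr (_ * _); rewrite !big_ord_recr /=; congr (_ * _).
  apply: eq_bigr => j _; rewrite -lift_max_widen !rmorphXn rmorphD /=.
  rewrite muniC muniX_lift ext_pt_lift map_polyC /= comp_polyC [mshift _ _]mmapX mmap1U.
  by rewrite -polyCD.
by rewrite !rmorphXn rmorphD /= muniC muniX_max ext_pt_max map_polyX comp_polyX addrC.
Qed.

Lemma mcoeff_comp_XaddC (P : {poly {mpoly K[n]}}) b l i :
  ((P \Po ('X + (b%:MP)%:P))`_l)@_i = (map_poly (mcoeff i) P \Po ('X + b%:P))`_l.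
Proof.
have -> : 'X + (b%:MP)%:P = map_poly (@mpolyC n K) ('X + b%:P).
  by rewrite rmorphD /= map_polyX map_polyC.
pose F k := (map_poly (mcoeff i) P)`_k * (('X + b%:P) ^+ k)`_l.
rewrite !coef_comp_poly raddf_sum /= [RHS](big_ord_widen (size P) F); last exact: size_poly.
rewrite [RHS]big_mkcond /=; apply: eq_bigr => k _; rewrite /F.
rewrite -rmorphXn coef_map /= mulrC mcoeffCM coef_map /= mulrC.
by case: ltnP => // /(nth_default 0); rewrite coef_map /= => ->; rewrite mul0r.
Qed.

End LastVariable.

Lemma msize_muni_coef (K : fieldType) n (f : {mpoly K[n.+1]}) l :
  (msize (muni f)`_l <= msize f - l)%N.
Proof.
rewrite [X in (X <= _)%N]msizeE; apply/bigmax_leqP_seq => i.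
rewrite mcoeff_msupp => i_supp _.
have : mnm_ext i l \in msupp f by rewrite mcoeff_msupp mcoeff_muni.
by move/msize_mdeg_lt; rewrite mdeg_mnm_ext ltn_subRL addnC.
Qed.

Section MultiplicitySchwartzZippel.
Variables (K : fieldType) (S : seq K).
Hypothesis uniqS : uniq S.

Definition vanishes_to n (r : nat) (f : {mpoly K[n]}) : Prop :=
  forall a : 'I_n -> K, (forall i, a i \in S) ->
  forall j : 'X_{1..n}, (mdeg j < r)%N -> (mshift a f)@_j = 0.

Lemma vanishes_to_taylor n r (f : {mpoly K[n.+1]}) a j b l :
  vanishes_to r f -> (forall i, a i \in S) -> b \in S -> (l < r - mdeg j)%N ->
  (map_poly (mcoeff j) (map_poly (mshift a) (muni f)) \Po ('X + b%:P))`_l = 0.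
Proof.
move=> f_vanish aS bS lt_l.
rewrite -mcoeff_comp_XaddC -muni_mshift_ext -mcoeff_muni.
apply: f_vanish; last by rewrite mdeg_mnm_ext -ltn_subRL.
by move=> i; case: (unliftP ord_max i) => [i' ->|->]; rewrite ?ext_pt_lift ?ext_pt_max.
Qed.

Lemma vanishes_to_lead_muni n r (f : {mpoly K[n.+1]}) : (0 < size S)%N ->
  vanishes_to r f -> vanishes_to (r - (size (muni f)).-1 %/ size S) (lead_coef (muni f)).
Proof.
move=> S_gt0 f_vanish a aS j lt_j; apply/eqP/negPn/negP => lead_j_neq0.
set F := muni f in lead_j_neq0 lt_j *; set t := (size F).-1 in lt_j.
set g := map_poly (mcoeff j) (map_poly (mshift a) F).
have g_neq0 : g != 0.
  by apply: contraNneq lead_j_neq0 => g0; rewrite -(coef0 _ t) -g0 !coef_map.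
have size_g : (size g <= t.+1)%N.
  by rewrite (leq_trans (size_poly _ _)) // (leq_trans (size_poly _ _)) // leqSpred.
have [/eqP|] := size_taylor0 (r := (r - mdeg j)%N) uniqS
  (fun b bS l => vanishes_to_taylor f_vanish aS bS); first by rewrite (negbTE g_neq0).
move=> /leq_trans /(_ size_g); rewrite ltnS leqNgt => /negP; apply.
apply: (leq_trans (ltn_ceil t S_gt0)); rewrite leq_mul2r.
by rewrite ltn_subRL addnC -ltn_subRL lt_j orbT.
Qed.

Lemma mpoly_vanishes_to_eq0 n r (f : {mpoly K[n]}) :
  (msize f <= r * size S)%N -> vanishes_to r f -> f = 0.
Proof.
elim: n r f => [|n IH] r f size_f f_vanish; apply/eqP/negPn/negP => f_neq0.
  have r_gt0 : (0 < r)%N.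
    rewrite lt0n; move: size_f; apply: contraTneq => ->.
    by rewrite mul0n leqn0 msize_poly_eq0.
  have size_f1 : (msize f <= 1)%N.
    by rewrite msizeE; apply/bigmax_leqP_seq => i _ _; rewrite mdegE big_ord0.
  have no_point : forall i : 'I_0, (0 : K) \in S by case.
  have := f_vanish (fun=> 0) no_point 0%MM; rewrite mdeg0 => /(_ r_gt0).
  rewrite (msize1_polyC size_f1) [mshift _ _]mmapC mcoeffC eqxx mulr1 => f0_eq0.
  by move: f_neq0; rewrite (msize1_polyC size_f1) f0_eq0 eqxx.
have S_gt0 : (0 < size S)%N.
  rewrite lt0n; move: size_f; apply: contraTneq => ->.
  by rewrite muln0 leqn0 msize_poly_eq0.
have lead_neq0 : lead_coef (muni f) != 0 by rewrite lead_coef_eq0 muni_eq0.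
move/eqP: lead_neq0; apply; apply: IH (vanishes_to_lead_muni S_gt0 f_vanish).
set t := (size (muni f)).-1; apply: (leq_trans (msize_muni_coef _ _)).
by rewrite -/t mulnBl (leq_trans (leq_sub2r t size_f)) // leq_sub2l // leq_divM.
Qed.

End MultiplicitySchwartzZippel.

Lemma rankFq_full (Fq : finFieldType) (K : fieldType) (iota : Fq -> K)
    (Row Col : finType) (M : Row -> Col -> K) :
  Fq_indep iota M setT -> rankFq iota M = #|Col|.
Proof.
move=> indepT; apply/eqP; rewrite eqn_leq; apply/andP; split.
  by apply/bigmax_leqP => S _; apply: max_card.
by have := @leq_bigmax_cond _ _ (fun S : {set Col} => #|S|) _ indepT; rewrite cardsT.
Qed.

Section GridOfV.
Variable Fq : finFieldType.
Local Notation F := (ratfun2 Fq).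

Lemma iota2_inj : injective (@iota2 Fq).
Proof. by move=> x y /eqP; rewrite tofrac_eq => /eqP /polyC_inj /polyC_inj. Qed.

Definition Vcoord (ce : Fq * Fq) : F := iota2 ce.1 * t1 Fq + iota2 ce.2 * t2 Fq.

Definition Vcoords : seq F := map Vcoord (enum {: Fq * Fq}).

Lemma Vcoord_inj : injective Vcoord.
Proof.
have Vcoord_frac c e : Vcoord (c, e) = tofrac ((c%:P * 'X)%:P + e%:P%:P * 'X).
  by rewrite /Vcoord /iota2 /t1 /t2 /= !tofracD !tofracM polyCM tofracM.
move=> [c e] [c' e'] /eqP; rewrite !Vcoord_frac tofrac_eq => /eqP eq_ce.
have := congr1 (fun p : {poly {poly Fq}} => p`_1) eq_ce.
have := congr1 (fun p : {poly {poly Fq}} => (p`_0)`_1) eq_ce.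
rewrite /= !coefD !coefC !coefCM !coefX /= coef0 !add0r !mulr1 !mulr0 !addr0.
by move=> -> /polyC_inj ->.
Qed.

Lemma uniq_Vcoords : uniq Vcoords.
Proof. by rewrite map_inj_uniq ?enum_uniq //; apply: Vcoord_inj. Qed.

Lemma size_Vcoords : size Vcoords = (#|Fq| ^ 2)%N.
Proof. by rewrite size_map -cardE card_prod mulnn. Qed.

Lemma Vcoords_Vpoint n (x : 'I_n -> F) :
  (forall i, x i \in Vcoords) -> exists uv, Vpoint uv =1 x.
Proof.
move=> xV; have /fin_all_exists [ce x_ce] : forall i, exists ce, x i = Vcoord ce.
  by move=> i; case/mapP: (xV i) => ce _ ->; exists ce.
by exists ([ffun i => (ce i).1], [ffun i => (ce i).2]) => i; rewrite /Vpoint !ffunE x_ce.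
Qed.

Lemma Fq_indep_EVAL n m d :
  (d < m * #|Fq| ^ 2)%N -> Fq_indep (@iota2 Fq) (@EVAL Fq n m d) setT.
Proof.
move=> lt_d; apply/forallP => c; apply/implyP => /forallP EVAL_c0.
pose f : {mpoly F[n]} := \sum_(a : 'X_{1..n < d.+1}) iota2 (c a) *: 'X_[a].
have coef_f (a : 'X_{1..n < d.+1}) : f@_a = iota2 (c a).
  rewrite raddf_sum (bigD1 a) //= mcoeffZ mcoeffX eqxx mulr1 big1 ?addr0 // => b ne_ba.
  by rewrite mcoeffZ mcoeffX -bmeqP (negbTE ne_ba) mulr0.
have size_f : (msize f <= m * size Vcoords)%N.
  rewrite size_Vcoords (leq_trans (mmeasure_sum _ _ _ _)) //; apply/bigmax_leqP => a _.
  by rewrite (leq_trans (mmeasureZ_le _ _ _)) // mmeasureX (leq_trans (bmdeg a)).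
have f_vanish : vanishes_to Vcoords m f.
  move=> x xV j lt_j; have [uv Vpoint_x] := Vcoords_Vpoint xV.
  rewrite -(eq_mshift Vpoint_x) -(eqP (EVAL_c0 (uv, BMultinom lt_j))).
  rewrite /f (raddf_sum (mshift _)) raddf_sum /=.
  apply: eq_big => [a|a _]; first by rewrite inE.
  by rewrite mshiftZ mcoeffCM /EVAL hasse_eval.
have f0 := mpoly_vanishes_to_eq0 uniq_Vcoords size_f f_vanish.
apply/forall_inP => a _; apply/eqP/iota2_inj.
by rewrite -coef_f f0 mcoeff0 /iota2 !polyC0 tofrac0.
Qed.

End GridOfV.

Local Close Scope ring_scope.

Theorem mainTheorem14 (Fq : finFieldType) (n m d : nat) :
  (d < m * #|Fq| ^ 2)%N ->
  rankFq (@iota2 Fq) (@EVAL Fq n m d) = #|{: 'X_{1..n < d.+1}}|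
  /\ #|{: 'X_{1..n < d.+1}}| = 'C(d + n, d).
Proof.
move=> lt_d; split; last exact: card_bmnm.
exact/rankFq_full/Fq_indep_EVAL.
Qed.
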